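(* Let $X$ be a nonempty finite set. For all $\kappa,\lambda,\mu,\nu\in\mathcal{D}(X)$ and every $\omega\in\Omega(\lambda,\mu)$, there exists $\pi\in\Omega(\kappa,\nu)$ such that $d_{TV}(\omega,\pi)\le d_{TV}(\kappa,\lambda)+d_{TV}(\mu,\nu)$.
   Context: $\mathcal{D}(Y)$ is the set of probability distributions on a finite set $Y$. $\Omega(\mu,\nu)=\{\omega\in\mathcal{D}(X\times X)\mid\forall x:\sum_y\omega(x,y)=\mu(x),\ \sum_y\omega(y,x)=\nu(x)\}$. For distributions $\alpha,\beta$ on a finite set $Y$ (here $Y=X$ or $Y=X\times X$), $d_{TV}(\alpha,\beta)=\max_{y\in Y}|\alpha(y)-\beta(y)|$. *)

From HB Require Import structures.
From mathcomp Require Import all_boot all_order all_algebra.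
Set Implicit Arguments. Unset Strict Implicit. Unset Printing Implicit Defensive.
Import Order.TTheory GRing.Theory Num.Theory.
Local Open Scope ring_scope.

Definition is_distr (R : realFieldType) (Y : finType) (alpha : Y -> R) : Prop :=
  (forall y, 0 <= alpha y) /\ \sum_(y : Y) alpha y = 1.

Definition is_coupling (R : realFieldType) (X : finType)
    (mu nu : X -> R) (omega : X * X -> R) : Prop :=
  is_distr omega /\
  (forall x, \sum_(y : X) omega (x, y) = mu x) /\
  (forall x, \sum_(y : X) omega (y, x) = nu x).

(* d_TV(alpha, beta) = max_y |alpha y - beta y| (as defined in the paper's
   context; the max of nonnegative values over a nonempty set, seeded by 0) *)
Definition dTV (R : realFieldType) (Y : finType) (alpha beta : Y -> R) : R :=
  \big[Num.max/0]_(y : Y) `|alpha y - beta y|.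

(* Move from [lambda] to [kappa] first.  Keep the fraction
   [min (kappa x) (lambda x) / lambda x] of every row [x] of [omega]; the
   column mass released this way is redistributed over the rows in proportion
   to the excess [kappa x - min (kappa x) (lambda x)].  Row sums become [kappa],
   column sums stay [mu], and an entry in row [x] moves by at most
   [|kappa x - lambda x|].  Transposing and repeating the construction moves
   the second marginal from [mu] to [nu]; the triangle inequality adds the two
   displacements. *)

From HB Require Import structures.
From mathcomp Require Import all_boot all_order all_algebra.
From mathcomp Require Import ring lra.
Set Implicit Arguments. Unset Strict Implicit. Unset Printing Implicit Defensive.
Import Order.TTheory GRing.Theory Num.Theory.
Local Open Scope ring_scope.

Section TotalVariation.
Variables (R : realFieldType) (Y : finType).

Lemma dTV_ge0 (alpha beta : Y -> R) : 0 <= dTV alpha beta.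
Proof. by rewrite /dTV; elim/big_rec: _ => // y m _ m0; rewrite le_max m0 orbT. Qed.

Lemma le_dTV (alpha beta : Y -> R) y : `|alpha y - beta y| <= dTV alpha beta.
Proof. exact: (le_bigmax 0 (fun y => `|alpha y - beta y|)). Qed.

Lemma dTV_le (alpha beta : Y -> R) d :
  0 <= d -> (forall y, `|alpha y - beta y| <= d) -> dTV alpha beta <= d.
Proof. by move=> d0 hd; apply: bigmax_le. Qed.

End TotalVariation.

Lemma sum_pair_rows (R : realFieldType) (X : finType) (omega : X * X -> R) :
  \sum_(p : X * X) omega p = \sum_x \sum_y omega (x, y).
Proof. by rewrite pair_bigA; apply: eq_bigr => -[]. Qed.

Definition transpose_pair (R : realFieldType) (X : finType)
    (omega : X * X -> R) (p : X * X) : R :=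
  omega (p.2, p.1).

Lemma coupling_transpose (R : realFieldType) (X : finType) (mu nu : X -> R)
    (omega : X * X -> R) :
  is_coupling mu nu omega -> is_coupling nu mu (transpose_pair omega).
Proof.
case=> [[o0 o1] [orow ocol]]; split; last by split.
split=> [p|]; first exact: o0.
by rewrite sum_pair_rows exchange_big -sum_pair_rows.
Qed.

Section Recouple.
Variables (R : realFieldType) (X : finType).
Variables (kappa lambda mu : X -> R) (omega : X * X -> R).
Hypotheses (hk : is_distr kappa) (hl : is_distr lambda).
Hypothesis ho : is_coupling lambda mu omega.

Definition kept x := Num.min (kappa x) (lambda x).
Definition keep_ratio x := kept x / lambda x.
Definition excess x := kappa x - kept x.
Definition excess_mass := \sum_x excess x.
Definition released y := \sum_x omega (x, y) * (1 - keep_ratio x).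
Definition recouple (p : X * X) : R :=
  omega p * keep_ratio p.1 + excess p.1 * released p.2 / excess_mass.

Let omega_ge0 p : 0 <= omega p. Proof. by case: ho => [[]]. Qed.
Let omega_row x : \sum_y omega (x, y) = lambda x. Proof. by case: ho => _ []. Qed.
Let omega_col y : \sum_x omega (x, y) = mu y. Proof. by case: ho => _ []. Qed.

Lemma kept_ge0 x : 0 <= kept x.
Proof. by case: hk hl => k0 _ [l0 _]; rewrite le_min k0 l0. Qed.

Lemma kept_le_lambda x : kept x <= lambda x.
Proof. by rewrite ge_min lexx orbT. Qed.

Lemma excess_ge0 x : 0 <= excess x.
Proof. by rewrite subr_ge0 ge_min lexx. Qed.

Lemma excess_mass_ge0 : 0 <= excess_mass.
Proof. by apply: sumr_ge0 => x _; apply: excess_ge0. Qed.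

Lemma excess_le_dist x : excess x <= `|kappa x - lambda x|.
Proof.
rewrite /excess /kept; case: (leP (kappa x) (lambda x)) => _; first by rewrite subrr.
exact: ler_norm.
Qed.

Lemma deficit_le_dist x : lambda x - kept x <= `|kappa x - lambda x|.
Proof.
rewrite /kept; case: (leP (kappa x) (lambda x)) => _; last by rewrite subrr.
by rewrite distrC ler_norm.
Qed.

(* When [lambda x = 0] the ratio is [0 / 0 = 0], and so is [kept x]. *)
Lemma lambda_keep_ratio x : lambda x * keep_ratio x = kept x.
Proof.
have [l0|ln0] := eqVneq (lambda x) 0; last by rewrite /keep_ratio mulrCA divff ?mulr1.
by rewrite l0 mul0r; apply/eqP; rewrite eq_le kept_ge0 -l0 kept_le_lambda.
Qed.

Lemma keep_ratio_ge0 x : 0 <= keep_ratio x.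
Proof. by case: hl => l0 _; rewrite divr_ge0 ?kept_ge0. Qed.

Lemma keep_ratio_le1 x : keep_ratio x <= 1.
Proof.
have [l0|ln0] := eqVneq (lambda x) 0; first by rewrite /keep_ratio l0 invr0 mulr0.
have lp : 0 < lambda x by case: hl => l0 _; rewrite lt_def ln0 l0.
by rewrite ler_pdivrMr // mul1r kept_le_lambda.
Qed.

Lemma released_ge0 y : 0 <= released y.
Proof. by apply: sumr_ge0 => x _; rewrite mulr_ge0 // subr_ge0 keep_ratio_le1. Qed.

Lemma released_eq y : released y = mu y - \sum_x omega (x, y) * keep_ratio x.
Proof. by rewrite -omega_col -sumrB; apply: eq_bigr => x _; rewrite mulrBr mulr1. Qed.

Lemma sum_released : \sum_y released y = excess_mass.
Proof.
rewrite /excess_mass /excess sumrB; case: hk => _ ->; case: hl => _ <-.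
rewrite -sumrB exchange_big; apply: eq_bigr => x _.
by rewrite -big_distrl /= omega_row mulrBr mulr1 lambda_keep_ratio.
Qed.

Lemma released_le_excess_mass y : released y <= excess_mass.
Proof.
by rewrite -sum_released (bigD1 y) //= lerDl sumr_ge0 // => z _; apply: released_ge0.
Qed.

Lemma recouple_ge0 p : 0 <= recouple p.
Proof.
apply: addr_ge0; first by rewrite mulr_ge0 ?keep_ratio_ge0.
by rewrite divr_ge0 ?mulr_ge0 ?excess_ge0 ?released_ge0 ?excess_mass_ge0.
Qed.

Lemma recouple_row x : \sum_y recouple (x, y) = kappa x.
Proof.
rewrite big_split /= -!big_distrl -big_distrr /= omega_row lambda_keep_ratio.
rewrite sum_released; have [D0|Dn0] := eqVneq excess_mass 0.
  have ex0 : excess x = 0.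
    by apply: (psumr_eq0P _ D0) => // z _; apply: excess_ge0.
  by rewrite ex0 !mul0r addr0; move/eqP: ex0; rewrite subr_eq0 => /eqP.
by rewrite mulfK // /excess addrC subrK.
Qed.

Lemma recouple_col y : \sum_x recouple (x, y) = mu y.
Proof.
rewrite big_split /= -!big_distrl /= -/excess_mass.
have [D0|Dn0] := eqVneq excess_mass 0.
  have r0 : released y = 0.
    apply: (psumr_eq0P _ (etrans sum_released D0)) => // z _.
    exact: released_ge0.
  by rewrite D0 !mul0r addr0; move/eqP: r0; rewrite released_eq subr_eq0 => /eqP.
by rewrite mulrAC divff // mul1r released_eq addrC subrK.
Qed.

Lemma recouple_coupling : is_coupling kappa mu recouple.
Proof.
split; last by split; [apply: recouple_row | apply: recouple_col].
split; first exact: recouple_ge0.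
rewrite sum_pair_rows (eq_bigr _ (fun x _ => recouple_row x)).
by case: hk.
Qed.

(* The entry loses [omega (x, y) * (1 - keep_ratio x)] and gains
   [excess x * released y / excess_mass]; both lie in [[0, |kappa x - lambda x|]]. *)
Lemma recouple_close x y :
  `|omega (x, y) - recouple (x, y)| <= `|kappa x - lambda x|.
Proof.
set d := `|kappa x - lambda x|.
have removed_ge0 : 0 <= omega (x, y) * (1 - keep_ratio x).
  by rewrite mulr_ge0 // subr_ge0 keep_ratio_le1.
have removed_le : omega (x, y) * (1 - keep_ratio x) <= d.
  apply: le_trans (deficit_le_dist x).
  have -> : lambda x - kept x = lambda x * (1 - keep_ratio x).
    by rewrite mulrBr mulr1 lambda_keep_ratio.
  rewrite ler_wpM2r //.
    by rewrite subr_ge0 keep_ratio_le1.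
  by rewrite -omega_row (bigD1 y) //= lerDl sumr_ge0.
have added_ge0 : 0 <= excess x * released y / excess_mass.
  by rewrite divr_ge0 ?mulr_ge0 ?excess_ge0 ?released_ge0 ?excess_mass_ge0.
have added_le : excess x * released y / excess_mass <= d.
  apply: le_trans (excess_le_dist x); rewrite -mulrA ler_piMr ?excess_ge0 //.
  have [D0|Dn0] := eqVneq excess_mass 0; first by rewrite D0 invr0 mulr0.
  rewrite ler_pdivrMr ?mul1r ?released_le_excess_mass //.
  by rewrite lt_def Dn0 excess_mass_ge0.
have -> : omega (x, y) - recouple (x, y)
    = omega (x, y) * (1 - keep_ratio x) - excess x * released y / excess_mass.
  by rewrite /recouple /=; ring.
by rewrite ler_norml; apply/andP; split; lra.
Qed.

End Recouple.

Theorem corollary1 (R : realFieldType) (X : finType) (hX : (0 < #|X|)%N)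
    (kappa lambda mu nu : X -> R)
    (hk : is_distr kappa) (hl : is_distr lambda)
    (hm : is_distr mu) (hn : is_distr nu)
    (omega : X * X -> R) (homega : is_coupling lambda mu omega) :
  exists pi : X * X -> R, is_coupling kappa nu pi /\
    dTV omega pi <= dTV kappa lambda + dTV mu nu.
Proof.
pose pi1 := recouple kappa lambda omega.
have c1 : is_coupling kappa mu pi1 by apply: recouple_coupling.
pose pi2 := recouple nu mu (transpose_pair pi1).
have c2 : is_coupling nu kappa pi2 by apply: recouple_coupling => //; apply: coupling_transpose.
exists (transpose_pair pi2); split; first exact: coupling_transpose.
apply: dTV_le => [|[x y]]; first by rewrite addr_ge0 ?dTV_ge0.
apply: le_trans (ler_distD (pi1 (x, y)) _ _) _.
apply: lerD; first exact: le_trans (recouple_close hk hl homega x y) (le_dTV _ _ x).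
apply: le_trans (recouple_close hn hm (coupling_transpose c1) y x) _.
by rewrite distrC le_dTV.
Qed.
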